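(* Let $G$ be a graph of order $n$ with maximum degree $\Delta\ge 1$. Then $$\gamma_{rdR}(G)\ge \frac{2n+(\Delta-2)\gamma_r(G)}{\Delta}.$$ Moreover, the bound is sharp: for every integer $\Delta\ge 4$ there is a graph with maximum degree $\Delta$ attaining equality.
   Context: All graphs are finite and simple. An RDRD function of $G$ is a function $f:V(G)\to\{0,1,2,3\}$ such that every vertex with value $0$ has at least two neighbors with value $2$ or at least one neighbor with value $3$, every vertex with value $1$ has a neighbor with value $2$ or $3$, and the subgraph induced by the vertices with value $0$ has no isolated vertices; $\gamma_{rdR}(G)$ is the minimum of $\sum_v f(v)$ over RDRD functions. A restrained dominating set of $G$ is a set $S\subseteq V(G)$ such that every vertex of $V(G)\setminus S$ has a neighbor in $S$ and a neighbor in $V(G)\setminus S$; $\gamma_r(G)$ is the minimum cardinality of such a set. *)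

From mathcomp Require Import all_boot all_order all_algebra.
Set Implicit Arguments. Unset Strict Implicit. Unset Printing Implicit Defensive.

Definition simple_graph (T : finType) (e : rel T) : Prop :=
  irreflexive e /\ symmetric e.

Definition maxdeg (T : finType) (e : rel T) : nat :=
  \max_(v : T) #|[set u | e v u]|.

Definition restrained_dom (T : finType) (e : rel T) (S : {set T}) : bool :=
  [forall v, (v \notin S) ==>
     ([exists u, (u \in S) && e v u] && [exists u, (u \notin S) && e v u])].

(* gamma_r: minimum size of a restrained dominating set (V(G) itself is one) *)
Definition gamma_r (T : finType) (e : rel T) : nat :=
  \big[minn/#|T|]_(S : {set T} | restrained_dom e S) #|S|.

Definition is_RDRD (T : finType) (e : rel T) (f : {ffun T -> 'I_4}) : bool :=
  [forall v,
    [&& ((f v : nat) == 0) ==>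
          ((2 <= #|[set u | e v u & (f u : nat) == 2]|)
           || [exists u, e v u && ((f u : nat) == 3)]),
        ((f v : nat) == 1) ==> [exists u, e v u && (2 <= (f u : nat))]
      & ((f v : nat) == 0) ==> [exists u, e v u && ((f u : nat) == 0)]]].

Definition weight (T : finType) (f : {ffun T -> 'I_4}) : nat :=
  \sum_(v : T) (f v : nat).

(* gamma_rdR: minimum weight of an RDRD function (the constant 2 is one) *)
Definition gamma_rdR (T : finType) (e : rel T) : nat :=
  \big[minn/(2 * #|T|)]_(f : {ffun T -> 'I_4} | is_RDRD e f) weight f.

From mathcomp Require Import all_boot all_order all_algebra.
From mathcomp Require Import zify ring lra.
Import Order.TTheory GRing.Theory Num.Theory.

Set Implicit Arguments.
Unset Strict Implicit.
Unset Printing Implicit Defensive.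

(* Let f be an RDRD function, S = {v | f v <> 0} and give every
   vertex the charge c(v) = [f v = 2] + 2 [f v = 3], so that
   weight f = |S| + sum c and |V| = |S| + |V \ S|.  Every vertex of value 0
   sees at least 2 units of charge among its neighbours, while the charge of
   a vertex is seen by at most Delta vertices; double counting gives
   2 |V \ S| <= Delta * sum c.  Moreover S is a restrained dominating set, so
   gamma_r <= |S|, and combining these yields
   Delta * weight f >= 2 n + (Delta - 2) gamma_r when Delta >= 2.  When
   Delta = 1 no vertex can lie outside a restrained dominating set, so
   gamma_r = n and S = V, which gives the bound directly.

   The wheel K_1 + C_D (3 <= D) has maximum degree D; the hub
   alone is a restrained dominating set, and value 3 on the hub with 0 on the
   rim is an RDRD function of weight 3.  Hence gamma_r = 1, and the lower
   bound, which now reads 3 <= gamma_rdR, forces gamma_rdR = 3: this is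
   exactly the equality case. *)

Lemma bigmin_leq (I : finType) (P : pred I) (F : I -> nat) (d : nat) (i : I) :
  P i -> \big[minn/d]_(j | P j) F j <= F i.
Proof. by move=> Pi; have := bigmin_le_cond d F Pi; rewrite minEnat leEnat. Qed.

Lemma card_set_indicator (T : finType) (P : pred T) :
  #|[set u | P u]| = \sum_u (P u : nat).
Proof.
rewrite -sum1_card big_mkcond /=; apply: eq_bigr => u _.
by rewrite inE; case: (P u).
Qed.

Section Degrees.
Variables (T : finType) (e : rel T).

Definition deg (v : T) : nat := #|[set u | e v u]|.

Lemma deg_le_maxdeg (v : T) : deg v <= maxdeg e.
Proof. exact: (@leq_bigmax T deg v). Qed.

Lemma deg_ge2 (v u1 u2 : T) : u1 != u2 -> e v u1 -> e v u2 -> 2 <= deg v.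
Proof.
move=> u12 vu1 vu2; have <- : #|[set u1; u2]| = 2 by rewrite cards2 u12.
by apply: subset_leq_card; apply/subsetP => u; rewrite !inE => /orP[]/eqP->.
Qed.

Lemma neighbour_sum_le (c : T -> nat) : symmetric e ->
  \sum_v \sum_u e v u * c u <= maxdeg e * \sum_u c u.
Proof.
move=> e_sym; rewrite exchange_big big_distrr /=; apply: leq_sum => u _.
rewrite -big_distrl /= leq_mul2r -/(deg u); apply/orP; right.
apply: leq_trans (deg_le_maxdeg u); rewrite /deg card_set_indicator.
by apply/eq_leq/eq_bigr => v _; rewrite e_sym.
Qed.

(* A vertex outside a restrained dominating set has a neighbour inside and a
   neighbour outside, hence degree at least 2. *)
Lemma deg_ge2_outside (S : {set T}) (v : T) :
  restrained_dom e S -> v \notin S -> 2 <= deg v.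
Proof.
move=> /forallP/(_ v)/implyP HS /HS /andP[/existsP[u1 /andP[u1S vu1]]].
move=> /existsP[u2 /andP[u2S vu2]]; apply: (deg_ge2 _ vu1 vu2).
by apply: contraNneq u2S => <-.
Qed.

Lemma restrained_low_degree (S : {set T}) :
  maxdeg e <= 1 -> restrained_dom e S -> S = setT.
Proof.
move=> Dle1 HS; apply/setP => v; rewrite inE; apply/negP => /negP vS.
by have := leq_trans (deg_ge2_outside HS vS) (leq_trans (deg_le_maxdeg v) Dle1).
Qed.

Lemma gamma_r_le (S : {set T}) : restrained_dom e S -> gamma_r e <= #|S|.
Proof. exact: bigmin_leq. Qed.

Lemma gamma_r_le_card : gamma_r e <= #|T|.
Proof.
apply: (big_ind (fun x => x <= #|T|)) => // [x y xT _|S _].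
  exact: leq_trans (geq_minl x y) xT.
exact: max_card.
Qed.

Lemma gamma_r_low_degree : maxdeg e <= 1 -> gamma_r e = #|T|.
Proof.
move=> Dle1; apply/eqP; rewrite eqn_leq gamma_r_le_card /=.
apply: (big_ind (fun x => #|T| <= x)) => // [x y xT yT|S HS].
  by rewrite leq_min xT yT.
by rewrite (restrained_low_degree Dle1 HS) cardsT.
Qed.

End Degrees.

Section RDRDFunctions.
Variables (T : finType) (e : rel T).
Variable f : {ffun T -> 'I_4}.

Definition nonzero_set : {set T} := [set v | (f v : nat) != 0].

(* The part of the weight exceeding 1: value 2 carries 1, value 3 carries 2. *)
Definition charge (v : T) : nat :=
  ((f v : nat) == 2) + 2 * ((f v : nat) == 3).

Lemma weight_split : weight f = #|nonzero_set| + \sum_v charge v.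
Proof.
rewrite /weight card_set_indicator -big_split /=; apply: eq_bigr => v _.
by rewrite /charge; case: (f v) => [[|[|[|[|k]]]] Hk].
Qed.

Hypothesis f_RDRD : is_RDRD e f.

Lemma nonzero_restrained : restrained_dom e nonzero_set.
Proof.
apply/forallP => v; apply/implyP; rewrite inE negbK => fv0.
have /and3P[/implyP/(_ fv0) dom _ /implyP/(_ fv0) /existsP[u /andP[vu fu0]]] :=
  forallP f_RDRD v.
apply/andP; split; last by apply/existsP; exists u; rewrite inE fu0 vu.
case/orP: dom => [two2|/existsP[w /andP[vw fw3]]]; last first.
  by apply/existsP; exists w; rewrite inE (eqP fw3) vw.
have /card_gt0P[w] : 0 < #|[set u | e v u & (f u : nat) == 2]|.
  exact: leq_trans two2.
by rewrite inE => /andP[vw fw2]; apply/existsP; exists w; rewrite inE (eqP fw2) vw.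
Qed.

Lemma charge_received (v : T) :
  (f v : nat) == 0 -> 2 <= \sum_u e v u * charge u.
Proof.
move=> fv0; have /and3P[/implyP/(_ fv0) dom _ _] := forallP f_RDRD v.
case/orP: dom => [two2|/existsP[w /andP[vw fw3]]].
  apply: leq_trans two2 _; rewrite card_set_indicator; apply: leq_sum => u _.
  by rewrite /charge; case: (e v u); case: ((f u : nat) == 2) => //=; lia.
by rewrite (bigD1 w) //= vw /charge (eqP fw3) /=; lia.
Qed.

Lemma zero_set_bound : symmetric e ->
  2 * #|~: nonzero_set| <= maxdeg e * \sum_v charge v.
Proof.
move=> e_sym; apply: leq_trans _ (neighbour_sum_le charge e_sym).
rewrite card_set_indicator big_distrr /=; apply: leq_sum => v _.
rewrite !inE negbK; case: eqP => [fv0|_]; last by rewrite muln0.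
by rewrite muln1; apply: charge_received; apply/eqP.
Qed.

(* The lower bound for a single RDRD function, in cleared-denominator form. *)
Lemma weight_lower_bound : symmetric e -> 1 <= maxdeg e ->
  2 * #|T| + maxdeg e * gamma_r e <= maxdeg e * weight f + 2 * gamma_r e.
Proof.
move=> e_sym Dge1; rewrite weight_split -(cardsC nonzero_set).
case: (leqP (maxdeg e) 1) => [Dle1|Dge2].
  have gT := gamma_r_low_degree Dle1.
  have Sfull := restrained_low_degree Dle1 nonzero_restrained.
  move: gT; rewrite Sfull setCT cards0 cardsT.
  have -> : maxdeg e = 1 by apply/eqP; rewrite eqn_leq Dle1 Dge1.
  lia.
have gS := gamma_r_le nonzero_restrained.
have zero := zero_set_bound e_sym.
move: gS zero Dge2; set D := maxdeg e; set g := gamma_r e; nia.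
Qed.

End RDRDFunctions.

(* The bound holds for every RDRD function and for the default value 2n,
   hence for their minimum gamma_rdR. *)
Lemma gamma_rdR_lower_bound (T : finType) (e : rel T) :
  simple_graph e -> 1 <= maxdeg e ->
  2 * #|T| + maxdeg e * gamma_r e <= maxdeg e * gamma_rdR e + 2 * gamma_r e.
Proof.
move=> [_ e_sym] Dge1; have gT := gamma_r_le_card e.
apply: (big_ind (fun x => 2 * #|T| + maxdeg e * gamma_r e <=
                          maxdeg e * x + 2 * gamma_r e)).
- by move: gT Dge1; set g := gamma_r e; set D := maxdeg e; nia.
- by move=> x y Hx Hy; rewrite /minn; case: ifP.
- by move=> f f_RDRD; apply: weight_lower_bound.
Qed.

Lemma ratio_bound (R : realFieldType) (n g w D : nat) : 0 < D ->
  2 * n + D * g <= D * w + 2 * g ->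
  ((2 * n%:R + (D%:R - 2) * g%:R) / D%:R <= w%:R :> R)%R.
Proof.
move=> Dpos; rewrite -(ler_nat R) !natrD !natrM => bound.
have DposR : (0 < D%:R :> R)%R by rewrite ltr0n.
by rewrite ler_pdivrMr // mulrBl mulrC; lra.
Qed.

Section Wheel.
Variable D : nat.
Hypothesis D_ge3 : 3 <= D.

(* Positivity of D, needed to reduce modulo D into 'I_D. *)
Lemma D_gt0 : 0 < D. Proof. lia. Qed.

Lemma succ_mod (j : nat) : j < D -> j.+1 %% D = (if j.+1 == D then 0 else j.+1).
Proof.
move=> jD; case: eqP => [->|jD']; first by rewrite modnn.
by rewrite modn_small // ltn_neqAle jD andbT; apply/eqP.
Qed.

Definition cycle_adj (i j : 'I_D) : bool :=
  ((j : nat) == i.+1 %% D) || ((i : nat) == j.+1 %% D).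

Definition wheel (x y : option 'I_D) : bool :=
  match x, y with
  | Some i, Some j => cycle_adj i j
  | None, None => false
  | _, _ => true
  end.

(* The wheel is loopless (as D >= 2) and symmetric. *)
Lemma wheel_simple : simple_graph wheel.
Proof.
split; last by move=> [i|] [j|] //=; rewrite /cycle_adj orbC.
move=> [i|] //=; rewrite /cycle_adj succ_mod // orbb.
by apply/eqP; have := ltn_ord i; case: eqP => ? ?; lia.
Qed.

Definition next (i : 'I_D) : 'I_D := Ordinal (ltn_pmod i.+1 D_gt0).
Definition prev (i : 'I_D) : 'I_D := Ordinal (ltn_pmod (i + D.-1) D_gt0).

Lemma cycle_adj_next (i : 'I_D) : cycle_adj i (next i).
Proof. by rewrite /cycle_adj /= eqxx. Qed.

Lemma cycle_adj_cases (i j : 'I_D) : cycle_adj i j -> j = next i \/ j = prev i.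
Proof.
case/orP => /eqP ij; [left|right]; apply: val_inj => //=.
move: ij; rewrite succ_mod //; case: eqP => [jD ->|_ ->].
  by rewrite add0n modn_small; lia.
by rewrite addSnnS prednK ?D_gt0 // modnDr modn_small.
Qed.

(* Rim vertices have degree at most 3 (hub, next, prev) ... *)
Lemma deg_rim (i : 'I_D) : deg wheel (Some i) <= 3.
Proof.
apply: (@leq_trans #|None |: [set Some (next i); Some (prev i)]|).
  apply: subset_leq_card; apply/subsetP => [[j|]] /=; rewrite !inE //=.
  by case/cycle_adj_cases => ->; rewrite eqxx ?orbT.
by rewrite cardsU1 cards2; case: (_ \notin _); case: (_ != _).
Qed.

Lemma deg_hub : deg wheel None = D.
Proof.
rewrite /deg; have -> : [set u | wheel None u] = [set~ None].
  by apply/setP => [[i|]]; rewrite !inE.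
by rewrite cardsC1 card_option card_ord.
Qed.

Lemma wheel_maxdeg : maxdeg wheel = D.
Proof.
apply/eqP; rewrite eqn_leq; apply/andP; split; last first.
  by rewrite -{1}deg_hub deg_le_maxdeg.
apply/bigmax_leqP => [[i|]] _; last exact: eq_leq deg_hub.
exact: leq_trans (deg_rim i) D_ge3.
Qed.

(* The hub alone restrained-dominates, and no empty set does. *)
Lemma wheel_gamma_r : gamma_r wheel = 1.
Proof.
apply/eqP; rewrite eqn_leq; apply/andP; split.
  rewrite -(cards1 (None : option 'I_D)); apply: gamma_r_le.
  apply/forallP => [[i|]]; apply/implyP; rewrite !inE //= => _.
  apply/andP; split; first by apply/existsP; exists None; rewrite !inE.
  by apply/existsP; exists (Some (next i)); rewrite !inE /= cycle_adj_next.
apply: (big_ind (fun x => 0 < x)) => [|x y|S /forallP/(_ None)].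
- by rewrite card_option.
- by rewrite leq_min => -> ->.
rewrite card_gt0; apply: contraTneq => ->; rewrite inE /=.
by apply/nandP; left; apply/existsP => -[u]; rewrite inE.
Qed.

Definition hub_function : {ffun option 'I_D -> 'I_4} :=
  [ffun x => if x is None then Ordinal (isT : 3 < 4) else Ordinal (isT : 0 < 4)].

Lemma hub_function_RDRD : is_RDRD wheel hub_function.
Proof.
apply/forallP => [[i|]]; rewrite !ffunE //=; apply/andP; split.
  by apply/orP; right; apply/existsP; exists None; rewrite ffunE.
by apply/existsP; exists (Some (next i)); rewrite ffunE /= cycle_adj_next.
Qed.

Lemma hub_function_weight : weight hub_function = 3.
Proof.
rewrite /weight (bigD1 None) //= ffunE /= big1 // => [[i|]] //= _.
by rewrite ffunE.
Qed.

(* The weight-3 function is optimal, by the lower bound with gamma_r = 1. *)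
Lemma wheel_gamma_rdR : gamma_rdR wheel = 3.
Proof.
apply/eqP; rewrite eqn_leq -{1}hub_function_weight bigmin_leq ?hub_function_RDRD //=.
have := gamma_rdR_lower_bound wheel_simple.
rewrite wheel_maxdeg wheel_gamma_r card_option card_ord => /(_ D_gt0).
by move: (gamma_rdR wheel) => x; nia.
Qed.

End Wheel.

Local Open Scope ring_scope.

Theorem theorem2p4 :
  (forall (T : finType) (e : rel T), simple_graph e -> (1 <= maxdeg e)%N ->
     (gamma_rdR e)%:R >=
       (2 * #|T|%:R + ((maxdeg e)%:R - 2) * (gamma_r e)%:R) / (maxdeg e)%:R
       :> rat)
  /\
  (forall D : nat, (4 <= D)%N ->
     exists (T : finType) (e : rel T), simple_graph e /\ maxdeg e = D /\
       (gamma_rdR e)%:R =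
         (2 * #|T|%:R + ((maxdeg e)%:R - 2) * (gamma_r e)%:R) / (maxdeg e)%:R
         :> rat).
Proof.
split=> [T e e_simple Dge1|D Dge4].
  exact/ratio_bound/gamma_rdR_lower_bound.
have D_ge3 : (3 <= D)%N by exact: leq_trans Dge4.
exists (option 'I_D : finType), (@wheel D); split; first exact: wheel_simple.
rewrite wheel_maxdeg // wheel_gamma_r // wheel_gamma_rdR // card_option card_ord.
split=> //; have D_neq0 : (D%:R : rat) != 0 by rewrite pnatr_eq0 -lt0n (D_gt0 D_ge3).
by rewrite -addn1 natrD; field.
Qed.
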